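(* Let $A$ be a unique factorization domain and $R$ a subring of $A$ such that the group of units of $R$ equals that of $A$ and $R_0\cap A=R$, where $R_0$ is the field of fractions of $R$ inside that of $A$. The following are equivalent: (i) $\operatorname{Sqf}R\subset\operatorname{Sqf}A$; (ii) for every $x\in A$ and $y\in\operatorname{Sqf}A$, if $x^2y\in R\setminus\{0\}$, then $x,y\in R$ (i.e. $R$ is square-factorially closed in $A$).
   Context: For a commutative ring $R$, $\operatorname{Sqf}R$ is the set of square-free elements of $R$, where $a\in R$ is square-free if it cannot be written as $a=b^2c$ with $b,c\in R$ and $b$ not a unit of $R$. *)

From HB Require Import structures.
From mathcomp Require Import all_boot all_order all_algebra.
Set Implicit Arguments. Unset Strict Implicit. Unset Printing Implicit Defensive.
Import Order.TTheory GRing.Theory Num.Theory.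
Local Open Scope ring_scope.

Section Defs.
Variable A : idomainType.

Definition unit_in (S : {pred A}) (b : A) : Prop :=
  b \in S /\ exists b', b' \in S /\ b * b' = 1.

Definition sqfree_in (S : {pred A}) (a : A) : Prop :=
  a \in S /\ ~ (exists b c, [/\ b \in S, c \in S, a = b ^+ 2 * c & ~ unit_in S b]).

Definition sqfree (a : A) : Prop := sqfree_in predT a.

Definition irreducible_elt (a : A) : Prop :=
  a != 0 /\ a \isn't a GRing.unit /\
  forall b c, a = b * c -> b \is a GRing.unit \/ c \is a GRing.unit.

Definition associated (a b : A) : Prop :=
  exists2 u, u \is a GRing.unit & a = u * b.

Definition is_UFD : Prop :=
  forall a : A, a != 0 -> a \isn't a GRing.unit ->
    (exists s : seq A, (forall x, x \in s -> irreducible_elt x) /\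
                        a = \prod_(x <- s) x) /\
    (forall s t : seq A,
        (forall x, x \in s -> irreducible_elt x) ->
        (forall x, x \in t -> irreducible_elt x) ->
        a = \prod_(x <- s) x -> a = \prod_(x <- t) x ->
        exists t', [/\ perm_eq t t', size s = size t' &
                   forall i, (i < size s)%N -> associated (nth 0 s i) (nth 0 t' i)]).

Definition is_subring (R : {pred A}) : Prop :=
  [/\ 1 \in R, forall x y, x \in R -> y \in R -> x - y \in R
    & forall x y, x \in R -> y \in R -> x * y \in R].

Definition same_units (R : {pred A}) : Prop :=
  forall u : A, u \is a GRing.unit <-> unit_in R u.

(* R_0 \cap A = R, where R_0 = { r / s | r, s \in R, s <> 0 } inside Frac(A):
   an element a of A lies in R_0 iff a * s = r for some r, s \in R, s <> 0. *)
Definition frac_closed (R : {pred A}) : Prop :=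
  forall a : A, (exists r s, [/\ r \in R, s \in R, s != 0 & a * s = r]) -> a \in R.

Definition sqf_closed (R : {pred A}) : Prop :=
  forall x y : A, sqfree y -> x ^+ 2 * y \in R -> x ^+ 2 * y != 0 ->
    x \in R /\ y \in R.

End Defs.

(* In a UFD every nonzero element a factors as a = x^2 y with y square-free,
   uniquely up to a unit: an irreducible p dividing x satisfies
   p^2 | x'^2 y' with y' square-free, hence p | x', and one divides out p.
   The existence argument (induction on the number of irreducible factors in A)
   runs inside any multiplicative submonoid whose nonunits are nonunits of A,
   in particular in R.
   (i) => (ii): write x^2 y in R as x'^2 y' with y' square-free in R, hence in A;
   uniqueness gives x = u x' with u a unit of A, hence of R, so x, y lie in R.
   (ii) => (i): write a square-free a of R as x^2 y in A; by (ii) x, y lie in R,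
   so x is a unit of R, and a = x^2 y is square-free in A. *)

From HB Require Import structures.
From mathcomp Require Import all_boot all_order all_algebra.
From Stdlib Require Import Classical_Prop.
Import GRing.Theory.
Set Implicit Arguments. Unset Strict Implicit.
Local Open Scope ring_scope.

Section SquareFreeDecomposition.
Variable A : idomainType.
Implicit Types (a b c d p q u x y : A) (s t : seq A).

Lemma unit_in_predT b : unit_in predT b <-> b \is a GRing.unit.
Proof.
split; first by move=> [_ [b' [_ bb']]]; apply/unitrPr; exists b'.
by move=> /unitrPr [b' bb']; split => //; exists b'.
Qed.

Lemma sqfree_sqr_unit y b c : sqfree y -> y = b ^+ 2 * c -> b \is a GRing.unit.
Proof.
move=> [_ sqf_y] yE; apply/negPn/negP => bN; apply: sqf_y.
by exists b, c; split => // /unit_in_predT; apply/negP.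
Qed.

Lemma sqfree_unit_sqrM u y : u \is a GRing.unit -> sqfree y -> sqfree (u ^+ 2 * y).
Proof.
move=> uU sqf_y; split => // -[b [c [_ _ E]]]; apply; apply/unit_in_predT.
rewrite -(divrK uU b) unitrM uU andbT; apply: (sqfree_sqr_unit (c := c) sqf_y).
by rewrite exprMn mulrAC -E mulrAC -exprMn mulrV // expr1n mul1r.
Qed.

Lemma sqfree_in_neq0 (S : {pred A}) a : 0 \in S -> sqfree_in S a -> a != 0.
Proof.
move=> S0 [_ sqf_a]; apply/eqP => a0; apply: sqf_a; exists 0, 0; split => //.
  by rewrite a0 mulr0.
by case=> _ [b' [_]]; rewrite mul0r => /eqP; rewrite eq_sym oner_eq0.
Qed.

Definition divides p a := exists d, a = p * d.

Lemma divides_prod_mem q s : q \in s -> divides q (\prod_(x <- s) x).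
Proof. by move=> qs; exists (\prod_(x <- rem q s) x); rewrite (big_rem q). Qed.

Lemma associated_divides p q a : associated p q -> divides q a -> divides p a.
Proof. by move=> [u uU ->] [d ->]; exists (u^-1 * d); rewrite -mulrA mulrCA mulVKr. Qed.

Lemma prod_nonunit_size_gt0 a s :
  a \isn't a GRing.unit -> a = \prod_(x <- s) x -> (0 < size s)%N.
Proof. by case: s => // aN; rewrite big_nil => a1; rewrite a1 unitr1 in aN. Qed.

Lemma irreducible_cat s t :
  (forall x, x \in s -> irreducible_elt x) -> (forall x, x \in t -> irreducible_elt x) ->
  forall x, x \in s ++ t -> irreducible_elt x.
Proof. by move=> s_irr t_irr x; rewrite mem_cat => /orP[]; [apply: s_irr | apply: t_irr]. Qed.

Hypothesis ufdA : is_UFD A.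

Lemma irreducible_prime p b c :
  irreducible_elt p -> divides p (b * c) -> divides p b \/ divides p c.
Proof.
move=> irr_p [d bcE]; have [p0 [pN p_irr]] := irr_p.
have [->|b0] := eqVneq b 0; first by left; exists 0; rewrite mulr0.
have [->|c0] := eqVneq c 0; first by right; exists 0; rewrite mulr0.
have [bU|bN] := boolP (b \is a GRing.unit).
  by right; exists (b^-1 * d); rewrite mulrCA -bcE mulKr.
have [cU|cN] := boolP (c \is a GRing.unit).
  by left; exists (c^-1 * d); rewrite mulrCA -bcE [b * c]mulrC mulKr.
have bc0 : b * c != 0 by rewrite mulf_neq0.
have bcN : b * c \isn't a GRing.unit by rewrite unitrM negb_and bN.
have d0 : d != 0 by apply: contraNneq bc0 => d0; rewrite bcE d0 mulr0.
have dN : d \isn't a GRing.unit.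
  apply/negP => dU; have /p_irr[] : p = b * (c / d) by rewrite mulrA bcE mulrK.
    by apply/negP.
  by rewrite unitrM unitrV dU andbT; apply/negP.
have [td [td_irr dE]] := (ufdA d0 dN).1.
have [tb [tb_irr bE]] := (ufdA b0 bN).1.
have [tc [tc_irr cE]] := (ufdA c0 cN).1.
have pd_irr x : x \in p :: td -> irreducible_elt x.
  by rewrite inE => /orP[/eqP -> //|]; apply: td_irr.
have bc_pd : b * c = \prod_(x <- p :: td) x by rewrite bcE big_cons -dE.
have bc_tbc : b * c = \prod_(x <- tb ++ tc) x by rewrite big_cat -bE -cE.
have [t [perm_t size_t assoc]] := (ufdA bc0 bcN).2 (p :: td) (tb ++ tc)
  pd_irr (irreducible_cat tb_irr tc_irr) bc_pd bc_tbc.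
have /= p_t0 := assoc 0%N isT.
have : nth 0 t 0 \in tb ++ tc by rewrite (perm_mem perm_t) mem_nth // -size_t.
rewrite mem_cat => /orP[] /divides_prod_mem /(associated_divides p_t0).
  by rewrite -bE; left.
by rewrite -cE; right.
Qed.

Lemma irreducible_divides_sqrM p x c :
  irreducible_elt p -> divides p (x ^+ 2 * c) -> divides p x \/ divides p c.
Proof.
move=> irr_p; rewrite expr2 -mulrA => /(irreducible_prime irr_p)[|/(irreducible_prime irr_p)[]].
all: by auto.
Qed.

Lemma irreducible_divides_sqr_sqfree p x y :
  irreducible_elt p -> sqfree y -> divides (p ^+ 2) (x ^+ 2 * y) -> divides p x.
Proof.
move=> irr_p sqf_y [d E]; have [p0 [pN _]] := irr_p.
have /(irreducible_divides_sqrM irr_p)[//|[z yE]] : divides p (x ^+ 2 * y).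
  by exists (p * d); rewrite E expr2 mulrA.
have /(irreducible_divides_sqrM irr_p)[//|[w zE]] : divides p (x ^+ 2 * z).
  by exists d; apply: (mulfI p0); rewrite mulrCA -yE E expr2 mulrA.
have yE' : y = p ^+ 2 * w by rewrite yE zE mulrA -expr2.
by rewrite (sqfree_sqr_unit sqf_y yE') in pN.
Qed.

Definition factorization_le a n := a \is a GRing.unit \/
  exists s, [/\ forall x, x \in s -> irreducible_elt x, a = \prod_(x <- s) x & (size s <= n)%N].

Lemma factorization_le_exists a : a != 0 -> exists n, factorization_le a n.
Proof.
move=> a0; have [aU|aN] := boolP (a \is a GRing.unit); first by exists 0%N; left.
by have [s [s_irr aE]] := (ufdA a0 aN).1; exists (size s); right; exists s.
Qed.

Lemma factorization_le_cofactor b c n : b * c != 0 -> b \isn't a GRing.unit ->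
  factorization_le (b * c) n -> exists2 m, (m < n)%N & factorization_le c m.
Proof.
move=> bc0 bN [|[s [s_irr bcE size_s]]]; first by rewrite unitrM (negbTE bN).
have b0 : b != 0 by apply: contraNneq bc0 => ->; rewrite mul0r.
have c0 : c != 0 by apply: contraNneq bc0 => ->; rewrite mulr0.
have bcN : b * c \isn't a GRing.unit by rewrite unitrM negb_and bN.
have [tb [tb_irr bE]] := (ufdA b0 bN).1.
have size_tb := prod_nonunit_size_gt0 bN bE.
have [cU|cN] := boolP (c \is a GRing.unit).
  by exists 0%N; [apply: leq_trans size_s; apply: prod_nonunit_size_gt0 bcN bcE | left].
have [tc [tc_irr cE]] := (ufdA c0 cN).1.
have bc_tbc : b * c = \prod_(x <- tb ++ tc) x by rewrite big_cat -bE -cE.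
have [t [perm_t size_t _]] :=
  (ufdA bc0 bcN).2 s (tb ++ tc) s_irr (irreducible_cat tb_irr tc_irr) bcE bc_tbc.
exists (size tc); last by right; exists tc.
move: size_s; rewrite size_t -(perm_size perm_t) size_cat; apply: leq_trans.
by rewrite -[X in (X < _)%N]add0n ltn_add2r.
Qed.

Lemma sqfree_decomposition_unique x x' y y' : x != 0 -> sqfree y -> sqfree y' ->
  x ^+ 2 * y = x' ^+ 2 * y' -> associated x x'.
Proof.
move=> x0; have [n fx] := factorization_le_exists x0.
elim/ltn_ind: n x x' x0 fx => n IH x x' x0 fx sqf_y sqf_y' E.
have [xU|xN] := boolP (x \is a GRing.unit).
  have x'U : x' \is a GRing.unit.
    apply: (sqfree_sqr_unit (c := x^-1 ^+ 2 * y') sqf_y).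
    by rewrite mulrCA -E mulrA -exprMn mulVr // expr1n mul1r.
  by exists (x / x'); rewrite ?divrK // unitrM unitrV xU x'U.
have [[|p x1s] [x_irr xE]] := (ufdA x0 xN).1; first by rewrite xE big_nil unitr1 in xN.
rewrite big_cons in xE; set x1 := \prod_(j <- x1s) j in xE.
have irr_p : irreducible_elt p by apply: x_irr; rewrite inE eqxx.
have [p0 [pN _]] := irr_p.
have [m lt_mn fx1] : exists2 m, (m < n)%N & factorization_le x1 m.
  by apply: factorization_le_cofactor pN _; rewrite -xE.
have [x1' x'E] : divides p x'.
  apply: (irreducible_divides_sqr_sqfree irr_p sqf_y'); exists (x1 ^+ 2 * y).
  by rewrite -E xE exprMn mulrA.
have x10 : x1 != 0 by apply: contraNneq x0 => x10; rewrite xE x10 mulr0.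
have E1 : x1 ^+ 2 * y = x1' ^+ 2 * y'.
  apply: (mulfI (expf_neq0 2 p0)); move: E.
  by rewrite xE x'E !exprMn -!mulrA.
have [u uU x1E] := IH m lt_mn x1 x1' x10 fx1 sqf_y sqf_y' E1.
by exists u; rewrite // xE x'E x1E mulrCA.
Qed.

Lemma sqfree_decomposition_exists (S : {pred A}) a :
  1 \in S -> (forall x y, x \in S -> y \in S -> x * y \in S) ->
  (forall u, u \is a GRing.unit -> unit_in S u) -> a != 0 -> a \in S ->
  exists x y, [/\ x \in S, y \in S, a = x ^+ 2 * y & sqfree_in S y].
Proof.
move=> S1 SM S_unit a0; have [n fa] := factorization_le_exists a0.
elim/ltn_ind: n a a0 fa => n IH a a0 fa aS.
have [[b [c [bS cS aE bNS]]]|sqf_a] :=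
  classic (exists b c, [/\ b \in S, c \in S, a = b ^+ 2 * c & ~ unit_in S b]); last first.
  by exists 1, a; split; rewrite ?expr1n ?mul1r.
have bN : b \isn't a GRing.unit by apply/negP => /S_unit.
have abcE : a = b * (b * c) by rewrite aE expr2 mulrA.
have bc0 : b * c != 0 by apply: contraNneq a0 => bc0; rewrite abcE bc0 mulr0.
have c0 : c != 0 by apply: contraNneq a0 => c0; rewrite aE c0 mulr0.
have [m1 lt_m1n fbc] : exists2 m, (m < n)%N & factorization_le (b * c) m.
  by apply: factorization_le_cofactor bN _; rewrite -abcE.
have [m2 lt_m21 fc] := factorization_le_cofactor bc0 bN fbc.
have [x [y [xS yS cE sqf_y]]] := IH m2 (ltn_trans lt_m21 lt_m1n) c c0 fc cS.
by exists (b * x), y; split; rewrite ?SM // aE cE exprMn mulrA.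
Qed.

Lemma sqf_closed_of_sqfree_sub (R : {pred A}) :
  is_subring R -> same_units R -> (forall a, sqfree_in R a -> sqfree a) -> sqf_closed R.
Proof.
move=> [R1 _ RM] unitsR sqfR x y sqf_y aR a0.
have [x' [y' [x'R y'R aE sqf_y']]] :=
  sqfree_decomposition_exists R1 RM (fun u => (unitsR u).1) a0 aR.
have x0 : x != 0 by apply: contraNneq a0 => ->; rewrite expr0n mul0r.
have [u uU xE] := sqfree_decomposition_unique x0 sqf_y (sqfR _ sqf_y') aE.
have [uR [v [vR uv1]]] := (unitsR u).1 uU.
have yE : y = v ^+ 2 * y'.
  apply: (mulfI (expf_neq0 2 x0)).
  by rewrite aE xE mulrA -exprMn [u * x']mulrC -[x' * u * v]mulrA uv1 mulr1.
by rewrite xE yE expr2 (RM _ _ uR x'R) (RM _ _ (RM _ _ vR vR) y'R).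
Qed.

Lemma sqfree_sub_of_sqf_closed (R : {pred A}) :
  is_subring R -> same_units R -> sqf_closed R -> forall a, sqfree_in R a -> sqfree a.
Proof.
move=> [R1 RB _] unitsR closedR a sqfR_a.
have a0 : a != 0 by apply: sqfree_in_neq0 sqfR_a; rewrite -(subrr 1) RB.
have [x [y [_ _ aE sqf_y]]] := sqfree_decomposition_exists (S := predT) isT
  (fun _ _ _ _ => isT) (fun u => (unit_in_predT u).2) a0 isT.
have [xR yR] : x \in R /\ y \in R by apply: closedR; rewrite -?aE //; case: sqfR_a.
have [/unitsR xU|xNR] := classic (unit_in R x).
  by rewrite aE; apply: sqfree_unit_sqrM.
by case: sqfR_a => _ []; exists x, y.
Qed.

End SquareFreeDecomposition.

Theorem theorem3p4 (A : idomainType) (R : {pred A}) :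
  is_UFD A -> is_subring R -> same_units R -> frac_closed R ->
  ((forall a : A, sqfree_in R a -> sqfree a) <-> sqf_closed R).
Proof.
move=> ufdA subR unitsR _; split.
  exact: sqf_closed_of_sqfree_sub.
exact: sqfree_sub_of_sqf_closed.
Qed.
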